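(* Let $c$ be a non-negative integer, $r$ a positive integer, $G$ a multigraph, and $\mathcal{C}$ a cluster partition of $G$ of capacity at most $r$ such that $\delta(G/\mathcal{C})\ge 8c$. Define $w:V(G)\to\mathbb{R}_{\ge 0}$ by $w(v)=|\mathrm{ext}(C)|/|C|$ for $v\in C\in\mathcal{C}$. Then for every $c$-bond cover $X$ of $G$, \[\frac{1}{2r}\,|E(G/\mathcal{C})|\;\le\;\sum_{v\in X}w(v)\;\le\;2\,|E(G/\mathcal{C})|.\]
   Context: Graphs are finite multigraphs without loops; when contracting edges, multiplicities of parallel edges created are summed and loops are deleted; edge counts are with multiplicity. The edge-degree of a vertex is the number of incident edges; $\delta(H)$ is the minimum edge-degree of $H$. A cluster partition of $G$ is a collection $\mathcal{C}$ of pairwise disjoint nonempty vertex sets, each inducing a connected subgraph of $G$, whose union is $V(G)$; its capacity is the maximum size of a set in $\mathcal{C}$. $G/\mathcal{C}$ is the multigraph obtained from $G$ by contracting all edges inside each cluster. For $C\in\mathcal{C}$, $\mathrm{ext}(C)$ is the set of edges with exactly one endpoint in $C$. $\theta_c$ is the graph on two vertices joined by $c$ parallel edges; $X\subseteq V(G)$ is a $c$-bond cover of $G$ if $G-X$ has no $\theta_c$ minor. *)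

From mathcomp Require Import all_boot all_order all_algebra.
Set Implicit Arguments. Unset Strict Implicit. Unset Printing Implicit Defensive.
Import Order.TTheory GRing.Theory Num.Theory.

(* A finite loopless multigraph on vertex type V is given by an edge
   multiplicity function m : V -> V -> nat (m u v = number of parallel
   edges between u and v), symmetric and zero on the diagonal. *)
Definition multigraph (V : finType) (m : V -> V -> nat) : Prop :=
  (forall u v, m u v = m v u) /\ (forall v, m v v = 0%N).

Definition adj_in (V : finType) (m : V -> V -> nat) (A : {set V}) : rel V :=
  fun u v => [&& u \in A, v \in A & (0 < m u v)%N].

Definition connected_in (V : finType) (m : V -> V -> nat) (A : {set V}) : Prop :=
  forall x y, x \in A -> y \in A -> connect (adj_in m A) x y.

Definition e_between (V : finType) (m : V -> V -> nat) (A B : {set V}) : nat :=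
  \sum_(u in A) \sum_(v in B) m u v.

Definition cluster_partition (V : finType) (m : V -> V -> nat)
    (C : {set {set V}}) : Prop :=
  partition C [set: V] /\ (forall K, K \in C -> connected_in m K).

Definition capacity_le (V : finType) (C : {set {set V}}) (r : nat) : Prop :=
  forall K, K \in C -> (#|K| <= r)%N.

Definition ext (V : finType) (m : V -> V -> nat) (K : {set V}) : nat :=
  e_between m K (~: K).

(* edge multiplicity in G/C between clusters K1 and K2 (loops deleted) *)
Definition quot_mult (V : finType) (m : V -> V -> nat) (K1 K2 : {set V}) : nat :=
  if K1 == K2 then 0%N else e_between m K1 K2.

Definition quot_deg (V : finType) (m : V -> V -> nat) (C : {set {set V}})
    (K : {set V}) : nat :=
  \sum_(K' in C) quot_mult m K K'.

Definition quot_min_deg_ge (V : finType) (m : V -> V -> nat)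
    (C : {set {set V}}) (d : nat) : Prop :=
  forall K, K \in C -> (d <= quot_deg m C K)%N.

(* |E(G/C)| : each edge is counted twice in the ordered sum *)
Definition quot_edges (V : finType) (m : V -> V -> nat) (C : {set {set V}}) : nat :=
  (\sum_(K1 in C) \sum_(K2 in C) quot_mult m K1 K2)./2.

(* H = G - X (restricted to vertex set ~: X) has a theta_c minor:
   there are two disjoint nonempty branch sets in V \ X, each inducing
   a connected subgraph, joined by at least c edges. *)
Definition has_theta_minor_avoiding (V : finType) (m : V -> V -> nat)
    (X : {set V}) (c : nat) : Prop :=
  exists A B : {set V},
    [/\ A != set0, B != set0, [disjoint A & B],
        [disjoint A & X] && [disjoint B & X]
      & [/\ connected_in m A, connected_in m B & (c <= e_between m A B)%N]].

Definition bond_cover (V : finType) (m : V -> V -> nat) (c : nat)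
    (X : {set V}) : Prop :=
  ~ has_theta_minor_avoiding m X c.

Definition weight (V : finType) (m : V -> V -> nat) (C : {set {set V}})
    (v : V) : rat :=
  ((ext m (pblock C v))%:R / (#|pblock C v|)%:R)%R.

From mathcomp Require Import all_boot all_order all_algebra.
From mathcomp Require Import zify ring.
Import Order.TTheory GRing.Theory Num.Theory.
Set Implicit Arguments. Unset Strict Implicit. Unset Printing Implicit Defensive.

(* Summing w over a cluster K gives |ext K|, so the total weight is 2|E(G/C)|;
   this is the upper bound.  For the lower bound let D be the union of the
   clusters that avoid X, N their number and Q the total degree in G/C of the
   clusters meeting X.  Since G - X has no theta_c minor, two adjacent connected
   branch sets inside D share fewer than c edges; merging them one pair at a
   time shows that G[D]/C has at most cN edges.  As every cluster has degree
   at least 8c, most of the degree of D goes to clusters meeting X, which yields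
   |E(G/C)| <= 2Q.  Finally each cluster K meeting X contains a vertex of X of
   weight |ext K|/|K| >= |ext K|/r, so X has weight at least Q/r. *)

Lemma even_sum_sym (I : finType) (f : I -> I -> nat) :
  (forall i j, f i j = f j i) -> (forall i, f i i = 0) ->
  ~~ odd (\sum_i \sum_j f i j).
Proof.
move=> f_sym f_diag.
pose h i j := if enum_rank i < enum_rank j then f i j else 0.
have f_h i j : f i j = h i j + h j i.
  rewrite /h; case: (ltngtP (enum_rank i) (enum_rank j)) => [_|_|/val_inj/enum_rank_inj ->].
  - by rewrite addn0.
  - by rewrite add0n f_sym.
  - by rewrite f_diag.
under eq_bigr do rewrite (eq_bigr _ (fun j _ => f_h _ j)) big_split.
by rewrite big_split /= [X in _ + X]exchange_big addnn odd_double.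
Qed.

Section Multigraph.
Variables (V : finType) (m : V -> V -> nat).
Implicit Types (A B : {set V}).

Lemma connect_adj_in_sub A B x y : A \subset B ->
  connect (adj_in m A) x y -> connect (adj_in m B) x y.
Proof.
move=> sAB; apply: connect_sub => u v /and3P[uA vA muv].
by apply: connect1; rewrite /adj_in (subsetP sAB u uA) (subsetP sAB v vA).
Qed.

Hypothesis m_sym : forall u v, m u v = m v u.

Lemma e_betweenC A B : e_between m A B = e_between m B A.
Proof.
by rewrite /e_between exchange_big; apply: eq_bigr => u _; apply: eq_bigr => v _.
Qed.

Lemma connected_inU A B a b : connected_in m A -> connected_in m B ->
  a \in A -> b \in B -> 0 < m a b -> connected_in m (A :|: B).
Proof.
move=> cA cB aA bB mab.
have inA x y : x \in A -> y \in A -> connect (adj_in m (A :|: B)) x y.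
  by move=> xA yA; apply: connect_adj_in_sub (subsetUl A B) (cA x y xA yA).
have inB x y : x \in B -> y \in B -> connect (adj_in m (A :|: B)) x y.
  by move=> xB yB; apply: connect_adj_in_sub (subsetUr A B) (cB x y xB yB).
have ab : adj_in m (A :|: B) a b by rewrite /adj_in !inE aA bB mab orbT.
have ba : adj_in m (A :|: B) b a by rewrite /adj_in !inE aA bB m_sym mab orbT.
move=> x y; rewrite !inE => /orP[xA|xB] /orP[yA|yB]; [exact: inA | | | exact: inB].
- exact: connect_trans (inA x a xA aA) (connect_trans (connect1 ab) (inB b y bB yB)).
- exact: connect_trans (inB x b xB bB) (connect_trans (connect1 ba) (inA a y aA yA)).
Qed.

Variable L : finType.
Implicit Types (lab : V -> L) (D : {set V}).

Definition label_block lab D l := [set v in D | lab v == l].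

Definition cross_edges lab D :=
  \sum_(u in D) \sum_(v in D) (if lab u == lab v then 0 else m u v).

Definition merge_label lab (l1 l2 : L) v := if lab v == l2 then l1 else lab v.

Lemma e_between_label_block lab D l l' :
  e_between m (label_block lab D l) (label_block lab D l')
  = \sum_(u in D) \sum_(v in D) (if (lab u == l) && (lab v == l') then m u v else 0).
Proof.
rewrite /e_between (eq_bigl (fun u => (u \in D) && (lab u == l))) => [|u]; last by rewrite inE.
rewrite big_mkcondr; apply: eq_bigr => u uD; case: (lab u == l) => /=; last by rewrite big1.
rewrite (eq_bigl (fun v => (v \in D) && (lab v == l'))) => [|v]; last by rewrite inE.
by rewrite big_mkcondr.
Qed.

Lemma cross_edges_merge lab D l1 l2 : l1 != l2 ->
  cross_edges lab D = cross_edges (merge_label lab l1 l2) D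
    + (e_between m (label_block lab D l1) (label_block lab D l2)).*2.
Proof.
move=> l12; rewrite -addnn {2}e_betweenC !e_between_label_block /cross_edges.
rewrite -!big_split; apply: eq_bigr => u _; rewrite -!big_split; apply: eq_bigr => v _ /=.
rewrite /merge_label; move: (lab u) (lab v) => a b.
have l21 : (l2 == l1) = false by rewrite eq_sym (negbTE l12).
case: (eqVneq a l2) => [->|a2]; case: (eqVneq b l2) => [->|b2];
  case: (eqVneq a l1) => [a1|a1]; case: (eqVneq b l1) => [b1|b1];
  by rewrite ?eqxx ?l21 ?(negbTE l12) ?(negbTE a2) ?(negbTE b2) /= ?addn0 ?add0n.
Qed.

Lemma label_block_merge lab D l1 l2 l : l != l2 ->
  label_block (merge_label lab l1 l2) D l
  = label_block lab D l :|: (if l == l1 then label_block lab D l2 else set0).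
Proof.
move=> l_2; apply/setP => w; rewrite /merge_label.
case: (eqVneq l l1) l_2 => [->|l_1] l_2; rewrite !inE;
  case: (eqVneq (lab w) l2) => [->|w2]; rewrite ?eqxx ?(negbTE w2) ?andbF ?orbF //.
- by rewrite andbT orbC; case: (w \in D).
- by rewrite eq_sym (negbTE l_1) eq_sym (negbTE l_2).
Qed.

Lemma card_merge_label lab D l1 l2 : l1 \in lab @: D -> l2 \in lab @: D -> l1 != l2 ->
  #|merge_label lab l1 l2 @: D| < #|lab @: D|.
Proof.
move=> l1D l2D l12; rewrite (cardsD1 l2 (lab @: D)) l2D ltnS subset_leq_card //.
apply/subsetP => _ /imsetP[w wD ->]; rewrite /merge_label !inE.
by case: (eqVneq (lab w) l2) => [_|w2]; rewrite ?l12 ?l1D ?w2 ?imset_f.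
Qed.

Lemma cross_edges_witness lab D : 0 < cross_edges lab D ->
  exists u v, [/\ u \in D, v \in D, lab u != lab v & 0 < m u v].
Proof.
rewrite lt0n sum_nat_eq0 => /forallPn[u]; rewrite negb_imply sum_nat_eq0.
case/andP=> uD /forallPn[v]; rewrite negb_imply -lt0n => /andP[vD].
by case: eqP => // /eqP luv muv; exists u, v.
Qed.

Variables (c : nat) (X : {set V}).
Hypothesis X_cover : bond_cover m c X.

Lemma e_between_lt_bond_cover A B : A != set0 -> B != set0 -> [disjoint A & B] ->
  [disjoint A & X] -> [disjoint B & X] -> connected_in m A -> connected_in m B ->
  e_between m A B < c.
Proof.
move=> A0 B0 AB AX BX cA cB; rewrite ltnNge; apply/negP => cAB.
by apply: X_cover; exists A, B; split; rewrite ?AX ?BX.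
Qed.

Lemma cross_edges_le lab D : [disjoint D & X] ->
  (forall l, l \in lab @: D -> connected_in m (label_block lab D l)) ->
  cross_edges lab D <= (c * #|lab @: D|).*2.
Proof.
elim: {lab}#|lab @: D|.+1 {-2}lab (ltnSn #|lab @: D|) => // n IH lab lt_n DX conn.
have [->//|/cross_edges_witness[u [v [uD vD luv muv]]]] := posnP (cross_edges lab D).
set B1 := label_block lab D (lab u); set B2 := label_block lab D (lab v).
have uB1 : u \in B1 by rewrite inE uD eqxx.
have vB2 : v \in B2 by rewrite inE vD eqxx.
have cB1 : connected_in m B1 by apply/conn/imset_f.
have cB2 : connected_in m B2 by apply/conn/imset_f.
have BD (l : L) : label_block lab D l \subset D by apply/subsetP => w /setIdP[].
have e12 : e_between m B1 B2 < c.
  apply: e_between_lt_bond_cover => //.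
  - by apply/set0Pn; exists u.
  - by apply/set0Pn; exists v.
  - rewrite -setI_eq0; apply/eqP/setP => w; rewrite !inE.
    by apply/negbTE; apply: contra luv => /andP[/andP[_ /eqP<-] /andP[_ /eqP<-]].
  - exact: disjointWl (BD _) DX.
  - exact: disjointWl (BD _) DX.
set lab' := merge_label lab (lab u) (lab v).
have conn' l : l \in lab' @: D -> connected_in m (label_block lab' D l).
  case/imsetP=> w wD ->; rewrite [lab' w]/lab' /merge_label.
  case: (eqVneq (lab w) (lab v)) => [_|wv].
    by rewrite label_block_merge ?eqxx //; apply: connected_inU muv.
  rewrite label_block_merge //; case: eqP => [->|_]; last by rewrite setU0; apply/conn/imset_f.
  exact: connected_inU muv.
have lt_N := card_merge_label (imset_f lab uD) (imset_f lab vD) luv.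
have le_x := IH lab' (leq_trans lt_N lt_n) DX conn'.
rewrite (cross_edges_merge _ _ luv) -/B1 -/B2.
apply: leq_trans (leq_add le_x (_ : _.*2 <= c.*2)) _; first by rewrite leq_double ltnW.
by rewrite -doubleD addnC -mulnS leq_double leq_mul2l lt_N orbT.
Qed.

End Multigraph.

Section Clusters.
Variables (V : finType) (m : V -> V -> nat) (C : {set {set V}}).
Hypothesis C_part : partition C [set: V].
Implicit Types (D K X : {set V}).

Let C_triv : trivIset C. Proof. by case/and3P: C_part. Qed.
Let C_cover : cover C = [set: V]. Proof. by case/and3P: C_part => /eqP. Qed.
Let pblockC v : pblock C v \in C. Proof. by rewrite pblock_mem // C_cover inE. Qed.
Let mem_pblockC v : v \in pblock C v. Proof. by rewrite mem_pblock C_cover inE. Qed.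
Let pblockE K v : K \in C -> v \in K -> pblock C v = K. Proof. exact: def_pblock. Qed.
Let mem_clusterE K v : K \in C -> (v \in K) = (pblock C v == K).
Proof. by move=> KC; apply/idP/eqP => [/(pblockE KC)|<-]. Qed.
Let card_cluster_gt0 K : K \in C -> 0 < #|K|.
Proof.
by move=> KC; rewrite card_gt0; apply: contraTneq KC => ->; case/and3P: C_part.
Qed.
Let big_clusters R (idx : R) (op : Monoid.com_law idx) (F : V -> R) :
  \big[op/idx]_v F v = \big[op/idx]_(K in C) \big[op/idx]_(v in K) F v.
Proof. by rewrite -big_trivIset // C_cover; apply: eq_bigl => v; rewrite inE. Qed.

Definition ext_deg u := \sum_v (if pblock C u == pblock C v then 0 else m u v).

Lemma sum_ext_deg_cluster K : K \in C -> \sum_(u in K) ext_deg u = ext m K.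
Proof.
move=> KC; apply: eq_bigr => u uK; rewrite big_mkcond; apply: eq_bigr => v _.
by rewrite (pblockE KC uK) inE (mem_clusterE _ KC) eq_sym; case: eqP.
Qed.

Lemma quot_deg_ext K : K \in C -> quot_deg m C K = ext m K.
Proof.
move=> KC; rewrite -sum_ext_deg_cluster // /ext_deg.
under [RHS]eq_bigr do rewrite big_clusters.
rewrite exchange_big; apply: eq_bigr => K' K'C; rewrite /quot_mult.
case: eqP => [<-|K'K].
  by rewrite big1 // => u uK; rewrite big1 // => v vK; rewrite !(pblockE KC) ?eqxx.
apply: eq_bigr => u uK; apply: eq_bigr => v vK.
by rewrite (pblockE KC uK) (pblockE K'C vK); case: eqP.
Qed.

Lemma sum_quot_mult :
  \sum_(K1 in C) \sum_(K2 in C) quot_mult m K1 K2 = \sum_u ext_deg u.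
Proof.
rewrite big_clusters; apply: eq_bigr => K KC.
by rewrite sum_ext_deg_cluster // -quot_deg_ext.
Qed.

Lemma sum_weight_cluster K :
  K \in C -> (\sum_(v in K) weight m C v = (ext m K)%:R)%R.
Proof.
move=> KC; rewrite (eq_bigr (fun=> (ext m K)%:R / #|K|%:R)%R); last first.
  by move=> v vK; rewrite /weight (pblockE KC vK).
by rewrite sumr_const -[(_ *+ _)%R]mulr_natr divfK // pnatr_eq0 -lt0n card_cluster_gt0.
Qed.

Lemma sum_weight : (\sum_v weight m C v = (\sum_u ext_deg u)%:R)%R.
Proof.
rewrite [in RHS]big_clusters natr_sum big_clusters.
by apply: eq_bigr => K KC; rewrite sum_weight_cluster // sum_ext_deg_cluster.
Qed.

Hypothesis m_sym : forall u v, m u v = m v u.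

Lemma quot_edges_double : (quot_edges m C).*2 = \sum_u ext_deg u.
Proof.
rewrite /quot_edges sum_quot_mult -[RHS]odd_double_half (negbTE (even_sum_sym _ _)) //.
  by move=> u v; rewrite eq_sym m_sym.
by move=> u; rewrite eqxx.
Qed.

Lemma weight_ge0 v : (0 <= weight m C v)%R.
Proof. by rewrite divr_ge0 ?ler0n. Qed.

Lemma sum_weight_le X : (\sum_(v in X) weight m C v <= ((quot_edges m C).*2)%:R)%R.
Proof.
rewrite quot_edges_double -sum_weight [leRHS](bigID (mem X)) /= lerDl.
by rewrite sumr_ge0 // => v _; apply: weight_ge0.
Qed.

Definition cover_avoiding (X : {set V}) := [set v | [disjoint pblock C v & X]].

Lemma sum_weight_ge X r : capacity_le C r ->
  ((\sum_(u in ~: cover_avoiding X) ext_deg u)%:R / r%:R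
     <= \sum_(v in X) weight m C v)%R.
Proof.
move=> C_cap; rewrite natr_sum mulr_suml big_mkcond [leRHS]big_mkcond !big_clusters.
apply: ler_sum => K KC; have [KX|KX] := boolP [disjoint K & X].
  rewrite big1 ?sumr_ge0 // => [v _|u uK]; first by case: ifP => // _; apply: weight_ge0.
  by rewrite !inE (pblockE KC uK) KX.
have /set0Pn[x /setIP[xK xX]] : K :&: X != set0 by rewrite setI_eq0.
rewrite (eq_bigr (fun u => (ext_deg u)%:R / r%:R)%R) => [|u uK]; last first.
  by rewrite !inE (pblockE KC uK) KX.
rewrite -mulr_suml -natr_sum sum_ext_deg_cluster // (bigD1 x) //= xX.
apply: (@le_trans _ _ (weight m C x)); last first.
  by rewrite lerDl sumr_ge0 // => v _; case: ifP; rewrite ?weight_ge0.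
have K_gt0 := card_cluster_gt0 KC.
rewrite /weight (pblockE KC xK) ler_wpM2l // lef_pV2 ?posrE ?ltr0n ?ler_nat ?C_cap //.
exact: leq_trans K_gt0 (C_cap K KC).
Qed.

Lemma label_block_avoiding X w : w \in cover_avoiding X ->
  label_block (pblock C) (cover_avoiding X) (pblock C w) = pblock C w.
Proof.
rewrite inE => wD; apply/setP => u; rewrite (mem_clusterE _ (pblockC w)) !inE.
by case: eqP => [->|_]; rewrite ?andbF ?andbT.
Qed.

Lemma sum_ext_deg_avoiding_ge d X : quot_min_deg_ge m C d ->
  d * #|pblock C @: cover_avoiding X| <= \sum_(u in cover_avoiding X) ext_deg u.
Proof.
move=> C_deg; rewrite (partition_big_imset (pblock C)) /= mulnC -sum_nat_const.
apply: leq_sum => _ /imsetP[w wD ->].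
rewrite (eq_bigl (fun u => u \in pblock C w)) => [|u]; last first.
  by move/setP/(_ u): (label_block_avoiding wD); rewrite inE.
by rewrite sum_ext_deg_cluster // -quot_deg_ext // C_deg.
Qed.

Lemma sum_ext_deg_le D : \sum_(u in D) ext_deg u
  <= cross_edges m (pblock C) D + \sum_(u in ~: D) ext_deg u.
Proof.
rewrite (eq_bigr _ (fun u _ => bigID (mem D) _ _)) big_split leq_add2l /= exchange_big.
rewrite [leqRHS](eq_bigl (fun u => u \notin D)) => [|u]; last by rewrite inE.
apply: leq_sum => v _; rewrite /ext_deg [leqRHS](bigID (mem D)) /=.
apply: leq_trans (leq_addr _ _); apply/eq_leq/eq_big => // u.
by rewrite eq_sym m_sym.
Qed.

Hypothesis C_conn : forall K, K \in C -> connected_in m K.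

Lemma cross_edges_avoiding_le c X : bond_cover m c X ->
  cross_edges m (pblock C) (cover_avoiding X)
    <= (c * #|pblock C @: cover_avoiding X|).*2.
Proof.
move=> X_cover; apply: (cross_edges_le m_sym X_cover).
  rewrite disjoint_subset; apply/subsetP => v; rewrite !inE => vD.
  by rewrite (disjointFr vD (mem_pblockC v)).
by move=> _ /imsetP[w wD ->]; rewrite label_block_avoiding //; apply: C_conn.
Qed.

Lemma quot_edges_le c X : bond_cover m c X -> quot_min_deg_ge m C (8 * c) ->
  quot_edges m C <= (\sum_(u in ~: cover_avoiding X) ext_deg u).*2.
Proof.
move=> X_cover C_deg; set D := cover_avoiding X.
have le_cross := cross_edges_avoiding_le X_cover.
have ge_deg := sum_ext_deg_avoiding_ge X C_deg.
have le_split := sum_ext_deg_le D.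
rewrite -leq_double.
have -> : (quot_edges m C).*2 = \sum_(u in D) ext_deg u + \sum_(u in ~: D) ext_deg u.
  rewrite quot_edges_double (bigID (mem D)) /=.
  by congr (_ + _); apply: eq_bigl => u; rewrite ?inE.
(* 8cN <= S <= x + Q and x <= 2cN give 3x <= Q, hence S + Q <= x + 2Q <= 4Q. *)
move: le_cross ge_deg le_split; rewrite -!mulnA -/D.
move: (c * _) (cross_edges _ _ _) (\sum_(u in D) _) (\sum_(u in ~: D) _) => z x S Q.
lia.
Qed.

End Clusters.

Local Open Scope ring_scope.

Theorem lemma5 (c r : nat) (V : finType) (m : V -> V -> nat)
    (C : {set {set V}}) :
  (0 < r)%N ->
  multigraph m ->
  cluster_partition m C ->
  capacity_le C r ->
  quot_min_deg_ge m C (8 * c) ->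
  forall X : {set V}, bond_cover m c X ->
    (1 / (2 * r)%:R) * (quot_edges m C)%:R <= \sum_(v in X) weight m C v
    /\ \sum_(v in X) weight m C v <= 2%:R * (quot_edges m C)%:R.
Proof.
move=> r_gt0 [m_sym _] [C_part C_conn] C_cap C_deg X X_cover; split.
  apply: le_trans _ (sum_weight_ge m C_part X C_cap).
  have := quot_edges_le C_part m_sym C_conn X_cover C_deg.
  move: (\sum_(u in _) _)%N => Q le_Q.
  have r_neq0 : r%:R != 0 :> rat by rewrite pnatr_eq0 -lt0n.
  rewrite (_ : Q%:R / r%:R = 1 / (2 * r)%:R * (Q.*2)%:R); last first.
    by rewrite -muln2 !natrM; field.
  by rewrite ler_wpM2l ?ler_nat // divr_ge0 ?ler0n.
by rewrite -natrM mul2n (sum_weight_le C_part m_sym).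
Qed.
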